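(* Let $G=(V,E,\mathcal{W})$ be a coherent matrix-weighted network as described in the context, and consider the consensus dynamics $\dot{\mathbf{y}}_i=\sum_j w_{ij}(\mathbf{R}_{ij}\mathbf{y}_j-\mathbf{y}_i)$, $i=1,\dots,n$, i.e. $\dot{\mathbf{y}}=-\mathcal{L}\mathbf{y}$ for $\mathbf{y}=(\mathbf{y}_1;\dots;\mathbf{y}_n)$, $\mathbf{y}_i\in\mathbb{R}^{n_d}$, with initial states $\mathbf{y}_i(0)$. Then for each node $v_j$, $\mathbf{y}_j(t)\to\mathbf{y}_j^*$ as $t\to\infty$, where $$\mathbf{y}_j^*=\mathbf{S}_{\sigma(j)1}\,\bar{\mathbf{y}}(0)/n,\qquad \bar{\mathbf{y}}(0)=\sum_{i=1}^n\mathbf{S}_{1\sigma(i)}\mathbf{y}_i(0).$$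
   Context: A matrix-weighted network (MWN) is $G=(V,E,\mathcal{W})$ with node set $V=\{v_1,\dots,v_n\}$ and edge set $E\subset V\times V$, whose underlying graph is connected. For a fixed dimension $n_d$, each ordered pair $(i,j)$ carries $\mathbf{W}_{ij}\in\mathbb{R}^{n_d\times n_d}$, with $\mathbf{W}_{ij}=0$ iff $(v_i,v_j)\notin E$, and $\mathbf{W}_{ij}=\mathbf{W}_{ji}^T$. Write $w_{ij}=\|\mathbf{W}_{ij}\|_2$ and, for edges, $\mathbf{R}_{ij}=\mathbf{W}_{ij}/w_{ij}$ (transformation of the edge; take the term to be zero when $w_{ij}=0$). $\mathcal{W}$ is the $nn_d\times nn_d$ block matrix with blocks $\mathbf{W}_{ij}$; $d_i=\sum_j w_{ij}$, $\mathcal{D}=\mathrm{diag}(d_i)\otimes\mathbf{I}$ ($\mathbf{I}$ the $n_d\times n_d$ identity), $\mathcal{L}=\mathcal{D}-\mathcal{W}$. The transformation of a directed path or cycle with consecutive edges $e_1,\dots,e_k$ is $\mathbf{R}(e_1)\cdots\mathbf{R}(e_k)$; $G$ is coherent if every directed cycle $(v_{i_1},v_{i_2}),\dots,(v_{i_l},v_{i_1})$ ($l\ge2$, distinct nodes) has transformation $\mathbf{I}$. For coherent $G$ there is a partition $\{V_1,\dots,V_{l_p}\}$ of $V$ such that edges inside a part have transformation $\mathbf{I}$, all edges from a part $V_a$ to a part $V_b$ share the same transformation, and every directed cycle of parts (as super nodes) has transformation $\mathbf{I}$. For such a partition, $\sigma(i)$ is the index of the part containing $v_i$, and $\mathbf{S}_{hl}$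 is the transformation of a directed path from a node of $V_h$ to a node of $V_l$. *)

From HB Require Import structures.
From mathcomp Require Import all_boot all_order all_algebra.
From mathcomp Require Import all_classical all_reals all_analysis.
Set Implicit Arguments. Unset Strict Implicit. Unset Printing Implicit Defensive.
Import Order.TTheory GRing.Theory Num.Theory.
Import numFieldNormedType.Exports.
Local Open Scope classical_set_scope.
Local Open Scope ring_scope.

Section MWN.
Variables (R : realType) (n nd : nat).
Variable W : 'I_n -> 'I_n -> 'M[R]_nd.

Definition vnorm2 (x : 'cV[R]_nd) : R := Num.sqrt (\sum_k (x k 0) ^+ 2).

Definition spec_norm (A : 'M[R]_nd) : R :=
  sup [set vnorm2 (A *m x) | x in [set x : 'cV[R]_nd | vnorm2 x = 1]].

Definition wgt (i j : 'I_n) : R := spec_norm (W i j).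

(* R_ij = W_ij / w_ij  (zero when w_ij = 0, since 0^-1 = 0) *)
Definition Rt (i j : 'I_n) : 'M[R]_nd := (wgt i j)^-1 *: W i j.

Definition edge : rel 'I_n := fun i j => W i j != 0.

(* transformation of a walk given as its node sequence s = [:: i1; ...; ik]:
   R(i1,i2) * R(i2,i3) * ... ; the identity for a single node *)
Definition walk_trans (s : seq 'I_n) : 'M[R]_nd :=
  foldr (fun e M => Rt e.1 e.2 *m M) 1%:M (zip s (behead s)).

Definition dpath (u v : 'I_n) (s : seq 'I_n) : Prop :=
  exists p, [/\ s = u :: p, path edge u p, uniq s & last u p = v].

Definition coherent : Prop :=
  forall (x : 'I_n) (p : seq 'I_n),
    (1 <= size p)%N -> uniq (x :: p) -> cycle edge (x :: p) ->
    walk_trans (x :: rcons p x) = 1%:M.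

Definition connected_graph : Prop := forall u v : 'I_n, connect edge u v.

Definition edges_trans (es : seq ('I_n * 'I_n)) : 'M[R]_nd :=
  foldr (fun e M => Rt e.1 e.2 *m M) 1%:M es.

(* the partition {V_1,...,V_lp} given by sigma : V -> parts (part k = sigma^-1 k),
   with the properties of the context *)
Definition coherent_partition (lp : nat) (sigma : 'I_n -> 'I_lp) : Prop :=
  [/\
      forall k : 'I_lp, exists i, sigma i = k,
      forall i j, edge i j -> sigma i = sigma j -> Rt i j = 1%:M,
      forall i j i' j', edge i j -> edge i' j' -> sigma i = sigma i' ->
        sigma j = sigma j' -> Rt i j = Rt i' j' &
      (* every directed cycle of parts V_{a1} -> ... -> V_{al} -> V_{a1}
         (l >= 2, distinct parts), realised by edges e_k from V_{ak} to V_{a(k+1)},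
         has transformation I *)
      forall es : seq ('I_n * 'I_n),
        (2 <= size es)%N -> all (fun e => edge e.1 e.2) es ->
        uniq [seq sigma e.1 | e <- es] ->
        cycle (fun e f => sigma e.2 == sigma f.1) es ->
        edges_trans es = 1%:M].

Definition part_trans (lp : nat) (sigma : 'I_n -> 'I_lp)
  (S : 'I_lp -> 'I_lp -> 'M[R]_nd) : Prop :=
  forall (h l : 'I_lp) (u v : 'I_n) (s : seq 'I_n),
    sigma u = h -> sigma v = l -> dpath u v s -> walk_trans s = S h l.

(* y solves  dy_i/dt = sum_j w_ij (R_ij y_j - y_i)  for t > 0,
   and is right-continuous at t = 0 (initial state y(0)) *)
Definition consensus_solution (y : R -> 'I_n -> 'cV[R]_nd) : Prop :=
  (forall (i : 'I_n) (t : R), 0 < t ->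
     is_derive t 1 (fun s => y s i)
       (\sum_j wgt i j *: (Rt i j *m y t j - y t i))) /\
  (forall i : 'I_n, y s i @[s --> 0^'+] --> y 0 i).

End MWN.

(* Coherence makes the transformation of a walk depend only on the parts of its
   endpoints, since cutting out a simple closed subwalk does not change it.
   Hence, for a fixed node u, the matrices E_i := S_(sigma u, sigma i) satisfy
   E_i R_ik = E_k on every edge and are inverted by S_(sigma i, sigma u), so
   z_i := E_i y_i obeys, coordinatewise, the scalar consensus dynamics
   z_i' = sum_k w_ik (z_k - z_i).  Coherence on 2-cycles also makes the Gram
   matrices of W_ij scalar, so w_ij = w_ji, and w_ij vanishes exactly off the
   edges.  For symmetric consensus on a connected graph the sum of the z_i is
   conserved, and a Poincare inequality gives V' <= - V / K for the disagreement
   V = sum_i (z_i - m)^2; hence z_i -> m, the average of the z_i(0), and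
   y_j = S_(sigma j, sigma u) z_j converges to S_(sigma j, sigma u) m. *)

From HB Require Import structures.
From mathcomp Require Import all_boot all_order all_algebra.
From mathcomp Require Import all_classical all_reals all_analysis.
From mathcomp Require Import lra ring zify.
Set Implicit Arguments.
Unset Strict Implicit.
Unset Printing Implicit Defensive.

Import Order.TTheory GRing.Theory Num.Theory.
Import numFieldNormedType.Exports.
Local Open Scope classical_set_scope.
Local Open Scope ring_scope.

Section MatrixLimits.
Context {R : realType} {T : Type} {F : set_system T} {FF : Filter F}.

Lemma cvg_mxP m n (M : T -> 'M[R]_(m, n)) (L : 'M[R]_(m, n)) :
  M t @[t --> F] --> L <-> forall i j, M t i j @[t --> F] --> L i j.
Proof.
split=> [ML i j | ML].
  apply/cvgrPdist_le => e e0; apply: filterS ((cvgrPdist_le _ _).1 ML e e0).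
  move=> t /(le_trans _); apply.
  rewrite [leRHS]/Num.Def.normr/= mx_normrE.
  by apply: le_trans (le_bigmax _ _ (i, j)); rewrite !mxE.
apply/cvgrPdist_le => e e0; near=> t.
rewrite /Num.Def.normr/= mx_normrE (bigmax_le _ (ltW e0))//= => ij _.
rewrite !mxE/=; move: ij; near: t; apply: filter_forall => ij.
exact: (cvgrPdist_le _ _).1 (ML ij.1 ij.2) _ e0.
Unshelve. all: by end_near. Qed.

Lemma cvg_sum n (f : 'I_n -> T -> R) (l : 'I_n -> R) :
  (forall i, f i t @[t --> F] --> l i) -> \sum_i f i t @[t --> F] --> \sum_i l i.
Proof. by move=> fl; apply: cvg_big => //; exact: add_continuous. Qed.

Lemma cvg_mulmxl m n p (A : 'M[R]_(m, n)) (M : T -> 'M[R]_(n, p)) L :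
  M t @[t --> F] --> L -> A *m M t @[t --> F] --> A *m L.
Proof.
move/cvg_mxP=> ML; apply/cvg_mxP => i j; under eq_cvg do rewrite mxE.
by rewrite mxE; apply: cvg_sum => k; apply: cvgM; [exact: cvg_cst | exact: ML].
Qed.

End MatrixLimits.

Section Derivatives.
Context {R : realType}.

Lemma is_derive_sumr n (f : 'I_n -> R -> R) (t : R) (df : 'I_n -> R) :
  (forall i, is_derive t 1 (f i) (df i)) ->
  is_derive t 1 (fun s => \sum_i f i s) (\sum_i df i).
Proof. by move/is_derive_sum; rewrite fct_sumE. Qed.

Lemma is_derive_mulmx_entry m n (A : 'M[R]_(m, n)) (Y : R -> 'cV[R]_n)
    (t : R) (dY : 'cV[R]_n) k :
  is_derive t 1 Y dY -> is_derive t 1 (fun s => (A *m Y s) k 0) ((A *m dY) k 0).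
Proof.
move=> [dY_ex <-].
have -> : (fun s => (A *m Y s) k 0) = (fun s => \sum_l A k l * Y s l 0).
  by apply/funext => s; rewrite mxE.
rewrite derive_mx // mxE; apply: is_derive_sumr => l; rewrite mxE.
by apply: is_deriveZ; apply: derivableP; move: dY_ex; rewrite derivable_mxP.
Qed.

Lemma is_derive_sqrB (c : R) (g : R -> R) (t dg : R) :
  is_derive t 1 g dg -> is_derive t 1 (fun s => (g s - c) ^+ 2) (2 * (g t - c) * dg).
Proof.
move=> gd; have gcd : is_derive t 1 (fun s => g s - c) dg.
  by apply: is_derive_eq (is_deriveB gd (is_derive_cst c t 1)) _; rewrite subr0.
by apply: is_derive_eq (is_deriveM gcd gcd) _; rewrite /GRing.scale /=; ring.
Qed.

Lemma is_derive_expRM (c t : R) :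
  is_derive t 1 (fun s => expR (c * s)) (expR (c * t) * c).
Proof.
have cd : is_derive t 1 (fun s : R => c * s) c.
  apply: is_derive_eq (is_deriveZ c (is_derive_id t 1)) _.
  by rewrite /GRing.scale /= mulr1.
exact: is_derive1_comp (is_derive_expR (c * t)) cd.
Qed.

Lemma ler0_is_derive_nincry (g dg : R -> R) (a : R) :
  (forall t, a < t -> is_derive t 1 g (dg t)) -> (forall t, a < t -> dg t <= 0) ->
  g s @[s --> a^'+] --> g a ->
  forall x y, a <= x -> x <= y -> g y <= g x.
Proof.
move=> gd dg_le0 ga; apply: ler0_derive1_nincry.
- by move=> x; rewrite in_itv/= andbT => /gd[].
- move=> x; rewrite in_itv/= andbT => ax; rewrite derive1E.
  by have [_ ->] := gd x ax; exact: dg_le0.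
- apply/continuous_within_itvcyP; split => // x; rewrite in_itv/= andbT => ax.
  by apply/differentiable_continuous/derivable1_diffP; have [] := gd x ax.
Qed.

Lemma is_derive0_cst_right (g : R -> R) (a : R) :
  (forall t, a < t -> is_derive t 1 g 0) -> g s @[s --> a^'+] --> g a ->
  forall t, a <= t -> g t = g a.
Proof.
move=> g0 ga t at_; apply/eqP; rewrite eq_le; apply/andP; split.
  exact: ler0_is_derive_nincry g0 _ ga _ _ (lexx a) at_.
rewrite -lerN2; apply: (@ler0_is_derive_nincry (-%R \o g) (fun=> 0)) => //.
- by move=> s /g0 gs; apply: is_derive_eq (is_deriveN gs) _; rewrite oppr0.
- exact: cvgN.
Qed.

End Derivatives.

Section WeightedGraph.
Variables (R : realType) (n : nat) (a : 'I_n -> 'I_n -> R).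
Hypothesis a_sym : forall i j, a i j = a j i.
Hypothesis a_ge0 : forall i j, 0 <= a i j.
Hypothesis a_connected : forall u v, connect (fun i j => 0 < a i j) u v.

Definition dirichlet (g : 'I_n -> R) : R :=
  \sum_i \sum_j a i j * (g i - g j) ^+ 2.

Lemma dirichlet_ge0 g : 0 <= dirichlet g.
Proof. by do 2!apply: sumr_ge0 => ? _; rewrite mulr_ge0 ?sqr_ge0. Qed.

Lemma sum_laplacian_eq0 g : \sum_i \sum_j a i j * (g j - g i) = 0.
Proof.
under eq_bigr do under eq_bigr do rewrite mulrBr.
under eq_bigr do rewrite sumrB.
rewrite sumrB exchange_big /=; apply/eqP; rewrite subr_eq0; apply/eqP.
by apply: eq_bigr => i _; apply: eq_bigr => j _; rewrite a_sym.
Qed.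

Lemma sum_laplacian_sqrB g c :
  \sum_i 2 * (g i - c) * \sum_j a i j * (g j - g i) = - dirichlet g.
Proof.
set S1 := \sum_i \sum_j a i j * (g i - c) * (g j - g i).
set S2 := \sum_i \sum_j a i j * (g j - c) * (g i - g j).
have S12 : S1 = S2.
  rewrite /S1 exchange_big /=.
  by apply: eq_bigr => i _; apply: eq_bigr => j _; rewrite a_sym.
have -> : \sum_i 2 * (g i - c) * \sum_j a i j * (g j - g i) = 2 * S1.
  rewrite /S1 mulr_sumr; apply: eq_bigr => i _.
  by rewrite !mulr_sumr; apply: eq_bigr => j _; ring.
have -> : dirichlet g = - (S1 + S2).
  rewrite /dirichlet -big_split -sumrN /=; apply: eq_bigr => i _.
  by rewrite -big_split -sumrN /=; apply: eq_bigr => j _; ring.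
by rewrite -S12 opprK; ring.
Qed.

(* Source of the Poincare constant [n^3 M + 1]: as [0^-1 = 0] only edges
   contribute to [M], each edge bounds its own jump by [M * dirichlet g], and
   connectivity propagates the bound along paths of length < n. *)
Let M := \sum_i \sum_j (a i j)^-1.

Let M_ge0 : 0 <= M.
Proof. by do 2!apply: sumr_ge0 => ? _; rewrite invr_ge0. Qed.

Lemma sqr_edge_jump_le g i j : 0 < a i j -> (g i - g j) ^+ 2 <= M * dirichlet g.
Proof.
move=> aij; rewrite -(mulKf (lt0r_neq0 aij) ((g i - g j) ^+ 2)).
have term_le (F : 'I_n -> 'I_n -> R) : (forall i j, 0 <= F i j) ->
    F i j <= \sum_i \sum_j F i j.
  move=> F0; rewrite (bigD1 i) //= (bigD1 j) //= -addrA lerDl.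
  by apply: addr_ge0; apply: sumr_ge0 => *; [|apply: sumr_ge0 => *].
apply: ler_pM.
- by rewrite invr_ge0 ltW.
- by rewrite mulr_ge0 ?sqr_ge0 ?ltW.
- by apply: (term_le (fun i j => (a i j)^-1)) => *; rewrite invr_ge0.
- by apply: (term_le (fun i j => a i j * _ ^+ 2)) => *; rewrite mulr_ge0 ?sqr_ge0.
Qed.

Lemma path_jump_le g u p : path (fun i j => 0 < a i j) u p ->
  `|g u - g (last u p)| <= (size p)%:R * Num.sqrt (M * dirichlet g).
Proof.
elim: p u => [|v p IH] u /=; first by rewrite subrr normr0 mul0r.
case/andP=> /(sqr_edge_jump_le g) uv /IH vp.
have {}uv : `|g u - g v| <= Num.sqrt (M * dirichlet g)
  by rewrite -sqrtr_sqr ler_sqrt // mulr_ge0 // dirichlet_ge0.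
rewrite (_ : g u - _ = (g u - g v) + (g v - g (last v p))); last by ring.
rewrite -addn1 natrD mulrDl mul1r [leRHS]addrC.
exact: le_trans (ler_normD _ _) (lerD uv vp).
Qed.

Lemma jump_le g u v : `|g u - g v| <= n%:R * Num.sqrt (M * dirichlet g).
Proof.
have /connectP[p u_p ->] := a_connected u v.
case/shortenP: u_p => p' p'_path p'_uniq _.
apply: le_trans (path_jump_le g p'_path) _; apply: ler_wpM2r; first exact: sqrtr_ge0.
rewrite ler_nat; have := max_card (mem (u :: p')).
by rewrite card_ord (card_uniqP p'_uniq) => /ltnW.
Qed.

Lemma mean0_norm_le g i : \sum_j g j = 0 ->
  `|g i| <= n%:R * Num.sqrt (M * dirichlet g).
Proof.
move=> g0; have n_gt0 : (0 : R) < n%:R by rewrite ltr0n (leq_ltn_trans _ (ltn_ord i)).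
rewrite -(ler_pM2l n_gt0) -[X in X * `|_|]ger0_norm // -normrM.
have -> : n%:R * g i = \sum_j (g i - g j).
  by rewrite sumrB g0 subr0 sumr_const card_ord mulr_natl.
apply: le_trans (ler_norm_sum _ _ _) _.
have -> : n%:R * (n%:R * Num.sqrt (M * dirichlet g)) =
    \sum_(j < n) n%:R * Num.sqrt (M * dirichlet g).
  by rewrite sumr_const card_ord mulr_natl.
by apply: ler_sum => j _; apply: jump_le.
Qed.

Lemma poincare : exists2 K, 0 < K &
  forall g, \sum_j g j = 0 -> \sum_j g j ^+ 2 <= K * dirichlet g.
Proof.
have nM_ge0 : 0 <= n%:R ^+ 3 * M by rewrite mulr_ge0 // exprn_ge0.
exists (n%:R ^+ 3 * M + 1) => [|g g0]; first lra.
have gi_le j : g j ^+ 2 <= (n%:R * Num.sqrt (M * dirichlet g)) ^+ 2.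
  by rewrite -real_normK ?num_real // lerXn2r ?nnegrE ?mulr_ge0 ?sqrtr_ge0 ?mean0_norm_le.
apply: le_trans (ler_sum _ (fun j _ => gi_le j)) _.
rewrite sumr_const card_ord; set D := dirichlet g.
have -> : (n%:R * Num.sqrt (M * D)) ^+ 2 *+ n = n%:R ^+ 3 * M * D.
  by rewrite exprMn sqr_sqrtr ?mulr_ge0 ?dirichlet_ge0 //; ring.
have := dirichlet_ge0 g; rewrite -/D; nra.
Qed.

End WeightedGraph.

Section ScalarConsensus.
Variables (R : realType) (n : nat) (a : 'I_n -> 'I_n -> R) (f : 'I_n -> R -> R).
Hypothesis n_gt0 : (0 < n)%N.
Hypothesis a_sym : forall i j, a i j = a j i.
Hypothesis a_ge0 : forall i j, 0 <= a i j.
Hypothesis a_connected : forall u v, connect (fun i j => 0 < a i j) u v.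
Hypothesis f_derive : forall i (t : R), 0 < t ->
  is_derive t 1 (f i) (\sum_j a i j * (f j t - f i t)).
Hypothesis f_cont0 : forall i, f i s @[s --> 0^'+] --> f i 0.

Let mean := n%:R^-1 * \sum_j f j 0.
Let disagreement (t : R) := \sum_j (f j t - mean) ^+ 2.

Lemma consensus_sum_const (t : R) : 0 <= t -> \sum_j f j t = \sum_j f j 0.
Proof.
apply: (@is_derive0_cst_right _ (fun s => \sum_j f j s)); last exact: cvg_sum.
move=> s s0; have := is_derive_sumr (fun j => f_derive j s0).
by rewrite sum_laplacian_eq0.
Qed.

Lemma consensus_sum_sub_mean (t : R) : 0 <= t -> \sum_j (f j t - mean) = 0.
Proof.
move=> t0; rewrite sumrB consensus_sum_const // sumr_const card_ord -mulr_natl.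
by rewrite /mean mulrA mulfV ?mul1r ?subrr // pnatr_eq0 -lt0n.
Qed.

Lemma is_derive_disagreement (t : R) : 0 < t ->
  is_derive t 1 disagreement (- dirichlet a (fun j => f j t)).
Proof.
move=> t0; rewrite -(sum_laplacian_sqrB a_sym _ mean).
exact: is_derive_sumr (fun j => is_derive_sqrB mean (f_derive j t0)).
Qed.

(* By the Poincare inequality, [disagreement t * expR (t / K)] is nonincreasing. *)
Lemma disagreement_decay : exists C, forall t : R, 1 <= t -> disagreement t * t <= C.
Proof.
have [K K_gt0 poincareK] := poincare a_ge0 a_connected.
pose c := K^-1; have c_gt0 : 0 < c by rewrite invr_gt0.
pose G t := disagreement t * expR (c * t).
have G_derive (t : R) : 0 < t ->
    is_derive t 1 G
      (expR (c * t) * (c * disagreement t - dirichlet a (fun j => f j t))).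
  move=> t0; apply: is_derive_eq
    (is_deriveM (is_derive_disagreement t0) (is_derive_expRM c t)) _.
  by rewrite /GRing.scale /=; ring.
have G_nincr : forall s t, 1 <= s -> s <= t -> G t <= G s.
  apply: (ler0_is_derive_nincry (fun t t1 => G_derive t (lt_trans ltr01 t1))).
    move=> t t1; rewrite mulr_ge0_le0 ?expR_ge0 // subr_le0 ler_pdivrMl //.
    have := poincareK _ (consensus_sum_sub_mean (ltW (lt_trans ltr01 t1))).
    congr (_ <= K * _); apply: eq_bigr => i _; apply: eq_bigr => j _.
    by congr (_ * _ ^+ 2); ring.
  apply: cvg_at_right_filter; apply: differentiable_continuous.
  by apply/derivable1_diffP; have [] := G_derive 1 ltr01.
exists (K * G 1) => t t1.
have -> : disagreement t * t = K * (disagreement t * (c * t)).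
  by rewrite /c; field; rewrite gt_eqF.
rewrite ler_pM2l //; apply: le_trans (G_nincr _ _ (lexx 1) t1).
rewrite /G ler_wpM2l //.
  by apply: sumr_ge0 => j _; apply: sqr_ge0.
by apply: le_trans (expR_ge1Dx _); rewrite lerDr.
Qed.

Lemma consensus_scalar i : f i t @[t --> +oo] --> mean.
Proof.
have [C decayC] := disagreement_decay.
apply/cvgrPdist_lt => e e0; near=> t.
have t1 : 1 <= t by near: t; apply: nbhs_pinfty_ge; apply: num_real.
have tC : C / e ^+ 2 < t by near: t; apply: nbhs_pinfty_gt; apply: num_real.
have sq_le : (f i t - mean) ^+ 2 <= disagreement t.
  rewrite /disagreement (bigD1 i) //= lerDl.
  by apply: sumr_ge0 => j _; apply: sqr_ge0.
rewrite distrC -sqrtr_sqr -(ger0_norm (ltW e0)) -sqrtr_sqr ltr_sqrt ?exprn_gt0 //.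
apply: le_lt_trans sq_le _.
rewrite ltr_pdivrMr ?exprn_gt0 // in tC.
have t_gt0 : 0 < t by apply: lt_le_trans ltr01 t1.
by rewrite -(ltr_pM2r t_gt0); apply: le_lt_trans (decayC t t1) _; rewrite mulrC.
Unshelve. all: by end_near. Qed.

End ScalarConsensus.

Lemma not_uniq_split_cycle (T : eqType) (s : seq T) : ~~ uniq s ->
  exists a y b c, s = a ++ y :: b ++ y :: c /\ uniq (y :: b).
Proof.
elim/last_ind: s => [//|s x IH]; rewrite rcons_uniq negb_and negbK.
have [s_uniq | /IH[a [y [b [c [-> yb_uniq]]]]] _] := boolP (uniq s).
  rewrite orbF => x_s; case/splitPr: x_s s_uniq => p1 p2 s_uniq.
  exists p1, x, p2, [::]; split; first by rewrite rcons_cat rcons_cons cats1.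
  by move: s_uniq; rewrite cat_uniq => /and3P[].
exists a, y, b, (rcons c x); split => //.
by rewrite rcons_cat rcons_cons rcons_cat rcons_cons.
Qed.

Section Walks.
Variables (R : realType) (n nd : nat) (W : 'I_n -> 'I_n -> 'M[R]_nd).

Definition is_walk (s : seq 'I_n) : bool :=
  if s is x :: p then path (edge W) x p else false.

Lemma walk_trans_cons x y p :
  walk_trans W (x :: y :: p) = Rt W x y *m walk_trans W (y :: p).
Proof. by []. Qed.

Lemma walk_trans_cat x p q :
  walk_trans W (x :: p ++ q) = walk_trans W (x :: p) *m walk_trans W (last x p :: q).
Proof.
elim: p x => [|z p IH] x; first by rewrite mul1mx.
by rewrite cat_cons !walk_trans_cons IH mulmxA.
Qed.

Lemma walk_trans_rcons x p y :
  walk_trans W (x :: rcons p y) = walk_trans W (x :: p) *m Rt W (last x p) y.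
Proof. by rewrite -cats1 walk_trans_cat walk_trans_cons mulmx1. Qed.

Lemma walk_trans_splice s1 x s2 :
  walk_trans W (s1 ++ x :: s2) = walk_trans W (rcons s1 x) *m walk_trans W (x :: s2).
Proof.
case: s1 => [|z s1]; first by rewrite mul1mx.
by rewrite cat_cons walk_trans_cat walk_trans_cons rcons_cons walk_trans_rcons mulmxA.
Qed.

Lemma is_walk_splice s1 x s2 :
  is_walk (s1 ++ x :: s2) = is_walk (rcons s1 x) && is_walk (x :: s2).
Proof. by case: s1 => [|z s1] //=; rewrite cat_path rcons_path /= andbA. Qed.

Hypothesis W_coh : coherent W.
Hypothesis Rt_loop : forall i, edge W i i -> Rt W i i = 1%:M.

Lemma closed_walk_trans y b : uniq (y :: b) -> is_walk (rcons (y :: b) y) ->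
  walk_trans W (rcons (y :: b) y) = 1%:M.
Proof.
case: b => [_ /= /andP[/Rt_loop yy _] | z b yb_uniq yb_walk].
  by rewrite walk_trans_cons yy mulmx1.
by move: yb_walk; rewrite rcons_cons; apply: W_coh.
Qed.

Variables (lp : nat) (sigma : 'I_n -> 'I_lp) (S : 'I_lp -> 'I_lp -> 'M[R]_nd).
Hypothesis S_part : part_trans W sigma S.

Lemma walk_trans_part x0 s : is_walk s ->
  walk_trans W s = S (sigma (head x0 s)) (sigma (last x0 s)).
Proof.
have [k] := ubnP (size s); elim: k s => // k IH s s_le s_walk.
have [s_uniq | /not_uniq_split_cycle[a [y [b [c [s_eq yb_uniq]]]]]] := boolP (uniq s).
  case: s s_walk s_uniq {s_le} => [//|u p] u_p u_p_uniq.
  by apply: (S_part _ _ (u := u) (v := last u p)) => //; exists p.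
move: s_walk; rewrite s_eq is_walk_splice => /andP[a_walk].
rewrite -cat_cons is_walk_splice => /andP[cycle_walk c_walk].
rewrite cat_cons walk_trans_splice -cat_cons walk_trans_splice.
rewrite closed_walk_trans // mul1mx -walk_trans_splice.
have -> : head x0 (a ++ (y :: b) ++ y :: c) = head x0 (a ++ y :: c).
  by case: a {a_walk s_eq}.
have -> : last x0 (a ++ (y :: b) ++ y :: c) = last x0 (a ++ y :: c).
  by rewrite !last_cat.
apply: IH; last by rewrite is_walk_splice a_walk.
by move: s_le; rewrite s_eq !size_cat /= size_cat /=; lia.
Qed.

End Walks.

Lemma spec_norm_scalar_gram (R : realType) (nd : nat) (A : 'M[R]_nd) (c : R) :
  (0 < nd)%N -> A^T *m A = c%:M -> spec_norm A = Num.sqrt c.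
Proof.
move=> nd_gt0 gram.
have sqr_sum (x : 'cV[R]_nd) : \sum_k (x k 0) ^+ 2 = (x^T *m x) 0 0.
  by rewrite mxE; apply: eq_bigr => k _; rewrite mxE expr2.
have unit_norm x : vnorm2 x = 1 -> vnorm2 (A *m x) = Num.sqrt c.
  rewrite /vnorm2 => x1; congr Num.sqrt.
  rewrite sqr_sum trmx_mul -mulmxA (mulmxA A^T) gram mul_scalar_mx -scalemxAr.
  rewrite mxE -sqr_sum.
  have sum_ge0 : 0 <= \sum_k x k 0 ^+ 2 by apply: sumr_ge0 => k _; apply: sqr_ge0.
  by rewrite -[X in _ * X]sqr_sqrtr // x1 expr1n mulr1.
rewrite /spec_norm (_ : [set _ | x in _] = [set Num.sqrt c]) ?sup1 //.
apply/seteqP; split => [_ [x /= x1 <-] | _ ->] /=; first exact: unit_norm.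
pose k0 := Ordinal nd_gt0.
have e_unit : vnorm2 (delta_mx k0 0 : 'cV[R]_nd) = 1.
  rewrite /vnorm2 (bigD1 k0) //= big1 => [|k /negbTE k_neq].
    by rewrite mxE !eqxx expr1n addr0 sqrtr1.
  by rewrite mxE k_neq expr0n.
by exists (delta_mx k0 0) => //; apply: unit_norm.
Qed.

Section Weights.
Variables (R : realType) (n nd : nat) (W : 'I_n -> 'I_n -> 'M[R]_nd).
Hypothesis nd_gt0 : (0 < nd)%N.
Hypothesis W_sym : forall i j, W i j = (W j i)^T.
Hypothesis W_coh : coherent W.
Hypothesis Rt_loop : forall i, edge W i i -> Rt W i i = 1%:M.

Lemma edge_sym i j : edge W i j = edge W j i.
Proof. by rewrite /edge W_sym trmx_eq0. Qed.

Lemma Rt_mul_rev i j : edge W i j -> Rt W i j *m Rt W j i = 1%:M.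
Proof.
case: (eqVneq i j) => [<- ii | i_neq_j ij]; first by rewrite Rt_loop ?mulmx1.
have := W_coh (x := i) (p := [:: j]) isT; rewrite !walk_trans_cons mulmx1; apply.
  by rewrite /= inE i_neq_j.
by rewrite /= ij -edge_sym ij.
Qed.

Let one_neq0 : (1%:M : 'M[R]_nd) != 0.
Proof.
pose k0 := Ordinal nd_gt0.
by apply/eqP => /matrixP/(_ k0 k0)/eqP; rewrite !mxE eqxx oner_eq0.
Qed.

Lemma scalar_gram i j :
  exists c, (W i j)^T *m W i j = c%:M /\ W i j *m (W i j)^T = c%:M.
Proof.
have [ij|] := boolP (edge W i j); last first.
  by rewrite negbK => /eqP ->; exists 0; rewrite mulmx0 mul0mx raddf0.
have := Rt_mul_rev ij; rewrite /Rt [W j i]W_sym -scalemxAl -scalemxAr scalerA.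
set k := _ * _ => gram.
have k_neq0 : k != 0 by apply: contraNneq one_neq0 => k0; rewrite -gram k0 scale0r.
exists k^-1; split; last by rewrite -scalemx1 -gram scalerA mulVf // scale1r.
have /mulmx1C : (k *: W i j) *m (W i j)^T = 1%:M by rewrite -scalemxAl.
by rewrite -scalemxAr => gram'; rewrite -scalemx1 -gram' scalerA mulVf // scale1r.
Qed.

Lemma wgt_sym i j : wgt W i j = wgt W j i.
Proof.
have [c [gram gram']] := scalar_gram i j.
rewrite /wgt [W j i]W_sym !(spec_norm_scalar_gram nd_gt0 (c := c)) ?trmxK //.
Qed.

Lemma wgt_ge0 i j : 0 <= wgt W i j.
Proof.
have [c [gram _]] := scalar_gram i j.
by rewrite /wgt (spec_norm_scalar_gram nd_gt0 gram) sqrtr_ge0.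
Qed.

Lemma wgt_eq0 i j : (wgt W i j == 0) = ~~ edge W i j.
Proof.
have [ij|] := boolP (edge W i j).
  apply: contra_neqF one_neq0 => /eqP w0.
  by rewrite -(Rt_mul_rev ij) /Rt w0 invr0 scale0r mul0mx.
rewrite negbK /wgt => /eqP ->.
by rewrite (@spec_norm_scalar_gram _ _ _ 0) ?sqrtr0 ?eqxx // mulmx0 raddf0.
Qed.

Lemma wgt_gt0 i j : (0 < wgt W i j) = edge W i j.
Proof. by rewrite lt_def wgt_eq0 negbK wgt_ge0 andbT. Qed.

End Weights.

Section PartTransformations.
Variables (R : realType) (n nd : nat) (W : 'I_n -> 'I_n -> 'M[R]_nd).
Variables (lp : nat) (sigma : 'I_n -> 'I_lp) (S : 'I_lp -> 'I_lp -> 'M[R]_nd).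
Hypothesis W_conn : connected_graph W.
Hypothesis W_coh : coherent W.
Hypothesis Rt_loop : forall i, edge W i i -> Rt W i i = 1%:M.
Hypothesis S_part : part_trans W sigma S.

Lemma walk_trans_path u p : path (edge W) u p ->
  walk_trans W (u :: p) = S (sigma u) (sigma (last u p)).
Proof. exact: (walk_trans_part W_coh Rt_loop S_part u (s := u :: p)). Qed.

Lemma part_trans_edge u i k : edge W i k ->
  S (sigma u) (sigma i) *m Rt W i k = S (sigma u) (sigma k).
Proof.
have /connectP[p u_p ->] := W_conn u i => ik.
rewrite -(walk_trans_path u_p) -walk_trans_rcons walk_trans_path ?last_rcons //.
by rewrite rcons_path u_p.
Qed.

Lemma part_trans_mulV u i : S (sigma i) (sigma u) *m S (sigma u) (sigma i) = 1%:M.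
Proof.
have /connectP[p i_p u_eq] := W_conn i u; have /connectP[q u_q i_eq] := W_conn u i.
have S_ii : S (sigma i) (sigma i) = 1%:M.
  by symmetry; apply: (S_part (u := i) (v := i) (s := [:: i])) => //; exists [::].
have w_ip : walk_trans W (i :: p) = S (sigma i) (sigma u).
  by rewrite walk_trans_path // -u_eq.
have w_uq : walk_trans W (u :: q) = S (sigma u) (sigma i).
  by rewrite walk_trans_path // -i_eq.
rewrite -w_ip -w_uq u_eq -walk_trans_cat walk_trans_path; last first.
  by rewrite cat_path i_p -u_eq.
by rewrite last_cat -u_eq -i_eq.
Qed.

End PartTransformations.

Section CoherentConsensus.
Variables (R : realType) (n nd : nat) (W : 'I_n -> 'I_n -> 'M[R]_nd).
Variables (lp : nat) (sigma : 'I_n -> 'I_lp) (S : 'I_lp -> 'I_lp -> 'M[R]_nd).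
Variables (y : R -> 'I_n -> 'cV[R]_nd) (u : 'I_n).
Hypothesis nd_gt0 : (0 < nd)%N.
Hypothesis W_sym : forall i j, W i j = (W j i)^T.
Hypothesis W_conn : connected_graph W.
Hypothesis W_coh : coherent W.
Hypothesis Rt_loop : forall i, edge W i i -> Rt W i i = 1%:M.
Hypothesis S_part : part_trans W sigma S.
Hypothesis y_sol : consensus_solution W y.

Let E i := S (sigma u) (sigma i).

Lemma transformed_consensus_derive i l (t : R) : 0 < t ->
  is_derive t 1 (fun s => (E i *m y s i) l 0)
    (\sum_k wgt W i k * ((E k *m y t k) l 0 - (E i *m y t i) l 0)).
Proof.
move=> t_gt0; apply: is_derive_eq (is_derive_mulmx_entry _ _ (y_sol.1 i t t_gt0)) _.
rewrite mulmx_sumr summxE; apply: eq_bigr => k _; rewrite -scalemxAr mxE.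
have [->|w_neq0] := eqVneq (wgt W i k) 0; first by rewrite !mul0r.
have ik : edge W i k by move: w_neq0; rewrite wgt_eq0 ?negbK.
by rewrite /E mulmxBr mulmxA (part_trans_edge W_conn W_coh Rt_loop S_part) // !mxE.
Qed.

Lemma transformed_consensus j :
  E j *m y t j @[t --> +oo] --> n%:R^-1 *: \sum_i E i *m y 0 i.
Proof.
apply/cvg_mxP => l z; rewrite [z]ord1 mxE summxE.
apply: (@consensus_scalar _ _ (wgt W) (fun i t => (E i *m y t i) l 0)).
- exact: leq_ltn_trans (ltn_ord j).
- exact: wgt_sym.
- exact: wgt_ge0.
- move=> v v'; apply: connect_sub (W_conn v v') => i k ik.
  by apply: connect1; rewrite wgt_gt0.
- by move=> i t; apply: transformed_consensus_derive.
- by move=> i; apply: (cvg_mxP _ _).1; apply: cvg_mulmxl; exact: y_sol.2.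
Qed.

End CoherentConsensus.

Theorem proposition3 (R : realType) (n nd : nat) (W : 'I_n -> 'I_n -> 'M[R]_nd)
  (Wsym : forall i j, W i j = (W j i)^T)
  (Gconn : connected_graph W)
  (Gcoh : coherent W)
  (lp : nat) (sigma : 'I_n -> 'I_lp.+1) (S : 'I_lp.+1 -> 'I_lp.+1 -> 'M[R]_nd)
  (Hpart : coherent_partition W sigma)
  (HS : part_trans W sigma S)
  (y : R -> 'I_n -> 'cV[R]_nd)
  (Hy : consensus_solution W y) :
  let ybar := \sum_(i < n) S ord0 (sigma i) *m y 0 i in
  forall j : 'I_n,
    y t j @[t --> +oo] --> (n%:R)^-1 *: (S (sigma j) ord0 *m ybar).
Proof.
move=> ybar j; have [nd0|nd_gt0] := posnP nd.
  by subst nd; apply: cvg_near_cst; near=> t; rewrite [LHS]flatmx0 [RHS]flatmx0.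
(* Only two properties of the partition are needed: [V_1] is nonempty, and
   self-loops, being edges inside a part, have transformation I. *)
have [part_surj Rt_loop _ _] := Hpart.
have {}Rt_loop i : edge W i i -> Rt W i i = 1%:M by move=> ii; exact: Rt_loop.
have [u u0] := part_surj ord0; rewrite /ybar -u0.
have y_eq t : y t j = S (sigma j) (sigma u) *m (S (sigma u) (sigma j) *m y t j).
  by rewrite mulmxA (part_trans_mulV Gconn Gcoh Rt_loop HS) mul1mx.
under eq_cvg do rewrite y_eq.
by rewrite scalemxAr; apply: cvg_mulmxl; exact: transformed_consensus.
Unshelve. all: by end_near. Qed.
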